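(* For $h>0$ let $\mathcal{K}_h=\{K\in\mathcal{K}:\ \mathrm{Tr}(P_K-P^\star)\le h\}$. For $K\in\mathcal{K}_h$ let $K'=R^{-1}B^\top P_K$ and $\Psi_K=(K-K')^\top R(K-K')$. Then for every $h>0$ there exists $b(h)>0$ such that $\|P_K-P^\star\|_F\le b(h)\|\Psi_K\|_F$ for all $K\in\mathcal{K}_h$.
   Context: Let $A\in\mathbb{R}^{n\times n}$, $B\in\mathbb{R}^{n\times m}$, $C\in\mathbb{R}^{p\times n}$, $D\in\mathbb{R}^{n\times q}$, $E\in\mathbb{R}^{p\times m}$, $\gamma>0$, with $Q:=C^\top C\succ 0$, $E^\top C=0$, $R:=E^\top E\succ 0$. For $K\in\mathbb{R}^{m\times n}$ set $A_K=A-BK$, $Q_K=Q+K^\top RK$, $T_{zw}(K)(s)=(C-EK)(sI-A+BK)^{-1}D$, and $\mathcal{K}=\{K:\ A_K\text{ Hurwitz},\ \|T_{zw}(K)\|_{\mathcal{H}_\infty}<\gamma\}$, where $\|G\|_{\mathcal{H}_\infty}=\sup_{\omega\in\mathbb{R}}\bar\sigma(G(j\omega))$. For $K\in\mathcal{K}$, $P_K$ denotes the unique symmetric positive definite solution of $A_K^\top P+PA_K+Q_K+\gamma^{-2}PDD^\top P=0$ for which $A_K+\gamma^{-2}DD^\top P_K$ is Hurwitz. $P^\star$ denotes the unique symmetric positive definite (stabilizing) solution of $A^\top P+PA-P(BR^{-1}B^\top-\gamma^{-2}DD^\top)P+Q=0$. $\mathrm{Tr}$ is the trace and $\|\cdot\|_F$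 the Frobenius norm. *)

From HB Require Import structures.
From mathcomp Require Import all_boot all_order all_algebra.
From mathcomp Require Import classical_sets reals.
From mathcomp Require Import complex.
Set Implicit Arguments. Unset Strict Implicit. Unset Printing Implicit Defensive.
Import Order.TTheory GRing.Theory Num.Theory.
Local Open Scope ring_scope.
Local Open Scope classical_set_scope.

Section Defs.
Variable R : realType.

Definition cmx (k l : nat) (M : 'M[R]_(k, l)) : 'M[R[i]]_(k, l) :=
  map_mx (fun x : R => Complex x 0) M.

Definition posdef (k : nat) (M : 'M[R]_k) : Prop :=
  M^T = M /\ forall x : 'cV[R]_k, x != 0 -> 0 < (x^T *m M *m x) 0 0.

Definition hurwitz (k : nat) (M : 'M[R]_k) : Prop :=
  forall lam : R[i], eigenvalue (cmx M) lam -> Re lam < 0.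

Definition cvnorm (k : nat) (v : 'cV[R[i]]_k) : R :=
  Num.sqrt (\sum_(i < k) (Normc.normc (v i 0)) ^+ 2).

Definition sigma_max (k l : nat) (G : 'M[R[i]]_(k, l)) : R :=
  sup [set cvnorm (G *m v) | v in [set v : 'cV[R[i]]_l | cvnorm v = 1]].

Definition frob (k l : nat) (M : 'M[R]_(k, l)) : R :=
  Num.sqrt (\sum_(i < k) \sum_(j < l) M i j ^+ 2).

Section Plant.
Variables (n m p q : nat).
Variables (A : 'M[R]_n) (B : 'M[R]_(n, m)) (C : 'M[R]_(p, n))
          (D : 'M[R]_(n, q)) (E : 'M[R]_(p, m)) (gamma : R).

Definition Qm : 'M[R]_n := C^T *m C.
Definition Rm : 'M[R]_m := E^T *m E.

Definition A_K (K : 'M[R]_(m, n)) : 'M[R]_n := A - B *m K.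
Definition Q_K (K : 'M[R]_(m, n)) : 'M[R]_n := Qm + K^T *m Rm *m K.

Definition Tzw (K : 'M[R]_(m, n)) (w : R) : 'M[R[i]]_(p, q) :=
  cmx (C - E *m K) *m invmx ((Complex 0 w)%:M - cmx (A_K K)) *m cmx D.

Definition hinf_norm (K : 'M[R]_(m, n)) : R :=
  sup [set sigma_max (Tzw K w) | w in [set: R]].

Definition Kset (K : 'M[R]_(m, n)) : Prop :=
  hurwitz (A_K K) /\ hinf_norm K < gamma.

Definition is_PK (K : 'M[R]_(m, n)) (P : 'M[R]_n) : Prop :=
  posdef P /\
  (A_K K)^T *m P + P *m A_K K + Q_K K + gamma ^- 2 *: (P *m D *m D^T *m P) = 0 /\
  hurwitz (A_K K + gamma ^- 2 *: (D *m D^T *m P)).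

Definition is_Pstar (P : 'M[R]_n) : Prop :=
  posdef P /\
  A^T *m P + P *m A
    - P *m (B *m invmx Rm *m B^T - gamma ^- 2 *: (D *m D^T)) *m P + Qm = 0 /\
  hurwitz (A - (B *m invmx Rm *m B^T - gamma ^- 2 *: (D *m D^T)) *m P).

End Plant.
End Defs.

From HB Require Import structures.
From mathcomp Require Import all_boot all_order all_algebra.
From mathcomp Require Import reals.
From mathcomp Require Import complex.
From mathcomp Require Import perm lra ring.
Import Order.TTheory GRing.Theory Num.Theory.
Local Open Scope ring_scope.

(* Let Δ = P_K - P⋆, A⋆ = A - (B R⁻¹ Bᵀ - γ⁻² D Dᵀ) P⋆ and F = A - B K + γ⁻² D Dᵀ P_K;
   both A⋆ and F are Hurwitz.  Subtracting the two Riccati equations gives the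
   Sylvester equation A⋆ᵀ Δ + Δ F = -(Ψ_K + Δ B (K - K')).  With p the
   characteristic polynomial of A⋆, Cayley-Hamilton turns it into a bound on
   Δ p(-F) that is linear in the right-hand side, while |det p(-F)| = ∏ |z + l|
   over the eigenvalues z of A⋆ and l of F is at least ∏ (-Re z)^n, whatever the
   Hurwitz F; the adjugate of p(-F) then bounds Δ, uniformly for bounded F.
   On K_h the trace bound makes P_K bounded, and K - K' = O(√|Ψ_K|) because
   Ψ_K = (E (K - K'))ᵀ E (K - K'); so F stays bounded when |Ψ_K| <= 1 and the
   term Δ B (K - K') is absorbed for small Ψ_K, while for large Ψ_K the a priori
   bound on Δ suffices.  All norms are compared through the entrywise l1 norm. *)

Set Implicit Arguments.
Unset Strict Implicit.
Unset Printing Implicit Defensive.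

Section EntrywiseNorm.
Variable R : numDomainType.

Definition mxnorm1 k l (X : 'M[R]_(k, l)) : R := \sum_i \sum_j `|X i j|.

Lemma mxnorm1_ge0 k l (X : 'M[R]_(k, l)) : 0 <= mxnorm1 X.
Proof. by apply: sumr_ge0 => i _; apply: sumr_ge0. Qed.

Lemma mxnorm1_entry k l (X : 'M[R]_(k, l)) i j : `|X i j| <= mxnorm1 X.
Proof.
rewrite /mxnorm1 (bigD1 i) //= (bigD1 j) //= -addrA lerDl.
by rewrite addr_ge0 ?sumr_ge0 // => i' _; rewrite sumr_ge0.
Qed.

Lemma mxnorm1_le k l (X : 'M[R]_(k, l)) t :
  (forall i j, `|X i j| <= t) -> mxnorm1 X <= (k * l)%:R * t.
Proof.
move=> Xt; apply: (@le_trans _ _ (\sum_(i < k) \sum_(j < l) t)).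
  by apply: ler_sum => i _; apply: ler_sum => j _.
by rewrite !sumr_const !card_ord -mulrnA mulr_natl mulnC.
Qed.

Lemma mxnorm1D k l (X Y : 'M[R]_(k, l)) : mxnorm1 (X + Y) <= mxnorm1 X + mxnorm1 Y.
Proof.
rewrite /mxnorm1 -big_split /=; apply: ler_sum => i _.
by rewrite -big_split /=; apply: ler_sum => j _; rewrite mxE ler_normD.
Qed.

Lemma mxnorm1N k l (X : 'M[R]_(k, l)) : mxnorm1 (- X) = mxnorm1 X.
Proof. by apply: eq_bigr => i _; apply: eq_bigr => j _; rewrite mxE normrN. Qed.

Lemma mxnorm1B k l (X Y : 'M[R]_(k, l)) : mxnorm1 (X - Y) <= mxnorm1 X + mxnorm1 Y.
Proof. by rewrite -(mxnorm1N Y) mxnorm1D. Qed.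

Lemma mxnorm1Z k l a (X : 'M[R]_(k, l)) : mxnorm1 (a *: X) = `|a| * mxnorm1 X.
Proof.
rewrite /mxnorm1 mulr_sumr; apply: eq_bigr => i _; rewrite mulr_sumr.
by apply: eq_bigr => j _; rewrite mxE normrM.
Qed.

Lemma mxnorm1_sum I (r : seq I) (P : pred I) k l (F : I -> 'M[R]_(k, l)) :
  mxnorm1 (\sum_(i <- r | P i) F i) <= \sum_(i <- r | P i) mxnorm1 (F i).
Proof.
elim/big_rec2: _ => [|i y Y _ IH]; last by rewrite (le_trans (mxnorm1D _ _)) ?lerD2l.
by rewrite /mxnorm1 big1 // => i _; rewrite big1 // => j _; rewrite mxE normr0.
Qed.

Lemma mxnorm1M k l r (X : 'M[R]_(k, l)) (Y : 'M[R]_(l, r)) :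
  mxnorm1 (X *m Y) <= mxnorm1 X * mxnorm1 Y.
Proof.
rewrite /mxnorm1 mulr_suml; apply: ler_sum => i _.
apply: (@le_trans _ _ (\sum_j \sum_t `|X i t| * `|Y t j|)).
  apply: ler_sum => j _; rewrite mxE (le_trans (ler_norm_sum _ _ _)) //.
  by apply: ler_sum => t _; rewrite normrM.
rewrite exchange_big /= mulr_suml; apply: ler_sum => t _.
rewrite -mulr_sumr ler_wpM2l // (bigD1 t) //= lerDl.
by apply: sumr_ge0 => t' _; apply: sumr_ge0.
Qed.

Lemma mxnorm1M_le k l r (X : 'M[R]_(k, l)) (Y : 'M[R]_(l, r)) a b :
  mxnorm1 X <= a -> mxnorm1 Y <= b -> mxnorm1 (X *m Y) <= a * b.
Proof. by move=> Xa Yb; rewrite (le_trans (mxnorm1M _ _)) // ler_pM ?mxnorm1_ge0. Qed.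

Lemma mxnorm1_scalar k a : mxnorm1 (a%:M : 'M[R]_k) = k%:R * `|a|.
Proof.
rewrite /mxnorm1 mulr_natl -[k in _ *+ k]card_ord -sumr_const; apply: eq_bigr => i _.
rewrite (bigD1 i) //= big1 ?addr0 ?mxE ?eqxx // => j /negbTE ji.
by rewrite mxE eq_sym ji normr0.
Qed.

Lemma mxnorm1X k (X : 'M[R]_k.+1) e t :
  mxnorm1 X <= t -> mxnorm1 (X ^+ e) <= k.+1%:R * t ^+ e.
Proof.
move=> Xt; elim: e => [|e IH]; first by rewrite expr0 mxnorm1_scalar normr1.
by rewrite exprSr [_ ^+ e.+1]exprSr mulrA; apply: mxnorm1M_le.
Qed.

Lemma mxnorm1_horner k (X : 'M[R]_k.+1) (p : {poly R}) t :
  mxnorm1 X <= t ->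
  mxnorm1 (horner_mx X p) <= \sum_(i < size p) `|p`_i| * (k.+1%:R * t ^+ i).
Proof.
move=> Xt; rewrite -{1}[p]coefK poly_def linear_sum (le_trans (mxnorm1_sum _ _ _)) //.
apply: ler_sum => i _; rewrite linearZ rmorphXn /= horner_mx_X mxnorm1Z.
by rewrite ler_wpM2l // mxnorm1X.
Qed.

Lemma normr_det_le k (X : 'M[R]_k) t :
  (forall i j, `|X i j| <= t) -> `|\det X| <= k`!%:R * t ^+ k.
Proof.
move=> Xt; rewrite (le_trans (ler_norm_sum _ _ _)) //.
rewrite -[k in t ^+ k]card_ord -prodr_const mulr_natl -card_Sn -sumr_const.
apply: ler_sum => s _; rewrite normrM normrX normrN1 expr1n mul1r normr_prod.
by apply: ler_prod => i _; rewrite normr_ge0 Xt.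
Qed.

Lemma mxnorm1_adj k (X : 'M[R]_k) t : mxnorm1 X <= t ->
  mxnorm1 (\adj X) <= (k * k)%:R * ((k.-1)`!%:R * t ^+ k.-1).
Proof.
move=> Xt; apply: mxnorm1_le => i j.
rewrite mxE /cofactor normrM normrX normrN1 expr1n mul1r.
case: k X Xt i j => [|k] X Xt i j; first by case: i.
by apply: normr_det_le => a b; rewrite !mxE (le_trans (mxnorm1_entry _ _ _)).
Qed.

Lemma mxnorm1_mul_adj k l (X : 'M[R]_(k, l)) (T : 'M[R]_l) :
  `|\det T| * mxnorm1 X <= mxnorm1 (X *m T) * mxnorm1 (\adj T).
Proof. by rewrite -mxnorm1Z -mul_mx_scalar -mul_mx_adj mulmxA mxnorm1M. Qed.

End EntrywiseNorm.

Section FrobeniusNorm.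
Variable R : realType.

Lemma entry_le_frob k l (X : 'M[R]_(k, l)) i j : `|X i j| <= frob X.
Proof.
have sq_ge0 (Y : 'M[R]_(k, l)) i' : 0 <= \sum_j Y i' j ^+ 2.
  by apply: sumr_ge0 => j' _; apply: sqr_ge0.
rewrite /frob -sqrtr_sqr ler_sqrt; last by apply: sumr_ge0.
rewrite (bigD1 i) //= (bigD1 j) //= -addrA lerDl.
apply: addr_ge0; first by apply: sumr_ge0 => j' _; apply: sqr_ge0.
by apply: sumr_ge0 => i' _; apply: sq_ge0.
Qed.

Lemma frob_le_mxnorm1 k l (X : 'M[R]_(k, l)) : frob X <= mxnorm1 X.
Proof.
rewrite /frob -(ger0_norm (mxnorm1_ge0 X)) -sqrtr_sqr ler_sqrt ?sqr_ge0 //.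
rewrite expr2 {2}/mxnorm1 mulr_sumr; apply: ler_sum => i _.
rewrite mulr_sumr; apply: ler_sum => j _.
by rewrite -real_normK ?num_real // expr2 mulrC ler_wpM2r ?mxnorm1_entry.
Qed.

Lemma mxnorm1_le_frob k l (X : 'M[R]_(k, l)) : mxnorm1 X <= (k * l)%:R * frob X.
Proof. by apply: mxnorm1_le => i j; apply: entry_le_frob. Qed.

Lemma mxnorm1_gram a b (Z : 'M[R]_(a, b)) :
  mxnorm1 Z <= (a * b)%:R * Num.sqrt (mxnorm1 (Z^T *m Z)).
Proof.
apply: mxnorm1_le => i j; rewrite -sqrtr_sqr ler_sqrt ?mxnorm1_ge0 //.
apply: le_trans (mxnorm1_entry _ j j); apply: le_trans (ler_norm _).
rewrite mxE (bigD1 i) //= mxE -expr2 lerDl.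
by apply: sumr_ge0 => i' _; rewrite mxE -expr2 sqr_ge0.
Qed.

End FrobeniusNorm.

Section PositiveDefinite.
Variable R : realType.

Lemma posdef_unitmx k (M : 'M[R]_k) : posdef M -> M \in unitmx.
Proof.
case=> _ Mpos; rewrite unitmxE unitfE; apply/negP => /det0P [v v0 vM].
have /Mpos : v^T != 0 by rewrite trmx_eq0.
by rewrite trmxK vM mul0mx mxE ltxx.
Qed.

Lemma posdef_qf_ge0 k (P : 'M[R]_k) (x : 'cV[R]_k) : posdef P -> 0 <= (x^T *m P *m x) 0 0.
Proof.
case=> _ Ppos; have [->|/Ppos/ltW //] := eqVneq x 0.
by rewrite mulmx0 mxE.
Qed.

Lemma qf_delta k (P : 'M[R]_k) a b :
  ((delta_mx a 0 : 'cV[R]_k)^T *m P *m (delta_mx b 0 : 'cV[R]_k)) 0 0 = P a b.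
Proof. by rewrite trmx_delta -rowE -colE !mxE. Qed.

Lemma posdef_diag_ge0 k (P : 'M[R]_k) i : posdef P -> 0 <= P i i.
Proof. by move=> /(posdef_qf_ge0 (delta_mx i 0 : 'cV[R]_k)); rewrite qf_delta. Qed.

Lemma posdef_entry k (P : 'M[R]_k) i j : posdef P -> `|P i j| <= (P i i + P j j) / 2.
Proof.
move=> Ppos; have [Psym _] := Ppos.
pose x s : 'cV[R]_k := delta_mx i 0 + s *: delta_mx j 0.
have qfx s : ((x s)^T *m P *m x s) 0 0 = P i i + s * (P i j + P j i) + s ^+ 2 * P j j.
  rewrite /x [(_ + _)^T]raddfD /= [(_ *: _)^T]linearZ /=.
  rewrite !(mulmxDl, mulmxDr) -!(scalemxAl, scalemxAr).
  by rewrite ![((_ + _ : 'M[R]_1) _ _)]mxE ![((_ *: _ : 'M[R]_1) _ _)]mxE !qf_delta; ring.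
have Pji : P j i = P i j by rewrite -{1}Psym mxE.
have := posdef_qf_ge0 (x 1) Ppos; have := posdef_qf_ge0 (x (-1)) Ppos.
rewrite !qfx Pji sqrrN expr1n ler_norml => h1 h2; apply/andP; split; lra.
Qed.

Lemma mxnorm1_posdef k (P : 'M[R]_k) : posdef P -> mxnorm1 P <= k%:R * \tr P.
Proof.
move=> Ppos; apply: (@le_trans _ _ (\sum_i \sum_j (P i i + P j j) / 2)).
  by apply: ler_sum => i _; apply: ler_sum => j _; apply: posdef_entry.
have -> : \sum_i \sum_j (P i i + P j j) / 2 = \sum_i (P i i *+ k + \tr P) / 2.
  by apply: eq_bigr => i _; rewrite -mulr_suml big_split /= sumr_const card_ord.
rewrite -mulr_suml big_split /= sumr_const card_ord sumrMnl.
by rewrite -mulr2n -[_ *+ 2]mulr_natr mulfK ?pnatr_eq0 // mulr_natl.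
Qed.

Lemma mxnorm1_posdef_gap k (P Pstar : 'M[R]_k) h :
  posdef P -> \tr (P - Pstar) <= h -> mxnorm1 P <= k%:R * (h + \tr Pstar).
Proof.
move=> P_pos tr_le; rewrite (le_trans (mxnorm1_posdef P_pos)) // ler_wpM2l //.
by move: tr_le; rewrite raddfB /=; lra.
Qed.

Lemma mxtrace_posdef_ge0 k (P : 'M[R]_k) : posdef P -> 0 <= \tr P.
Proof. by move=> P_pos; rewrite sumr_ge0 // => i _; rewrite posdef_diag_ge0. Qed.

End PositiveDefinite.

Lemma absorb_sqrt_term (R : realType) (c a d : R) :
  0 <= c -> 0 <= a -> 0 <= d ->
  exists2 b, 0 <= b & forall x y, 0 <= x -> 0 <= y -> x <= d ->
    (y <= 1 -> x <= c * (y + x * a * Num.sqrt y)) -> x <= b * y.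
Proof.
move=> c0 a0 d0; set e := (c * a) ^+ 2 + 1.
have e1 : 1 <= e by rewrite lerDr sqr_ge0.
exists (2 * c + 4 * d * e); first by rewrite addr_ge0 ?mulr_ge0 // (le_trans ler01).
move=> x y x0 y0 xd xcy.
have [ye|ey] := lerP (4 * e * y) 1; last by apply: (le_trans xd); nra.
have y1 : y <= 1 by nra.
have small : c * a * Num.sqrt y <= 1 / 2.
  have s0 : 0 <= c * a * Num.sqrt y by rewrite !mulr_ge0 ?sqrtr_ge0.
  have : (c * a * Num.sqrt y) ^+ 2 <= 1 / 4.
    by rewrite exprMn sqr_sqrtr // -/e; rewrite /e in ye *; nra.
  move: s0; move: (c * a * Num.sqrt y) => z; rewrite expr2; nra.
have : x <= c * y + x * (c * a * Num.sqrt y).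
  by move: (xcy y1); congr (_ <= _); ring.
have : 0 <= d * e * y by rewrite !mulr_ge0 // (le_trans _ e1).
nra.
Qed.

Section SylvesterDefect.
Variables (R : realDomainType) (k : nat) (M F X W : 'M[R]_k.+1).
Hypothesis sylvMF : M *m X + X *m F = - W.

Definition sylvester_defect e := M ^+ e *m X - X *m (- F) ^+ e.

Lemma sylvester_defectS e :
  sylvester_defect e.+1 = M *m sylvester_defect e - W *m (- F) ^+ e.
Proof.
have -> : W = - (M *m X + X *m F) by rewrite sylvMF opprK.
rewrite /sylvester_defect !exprS -!mulmxE mulmxBr !mulNmx !mulmxN !opprK.
by rewrite mulmxDl !mulmxA addrA subrK.
Qed.

Lemma mxnorm1_sylvester_defect t e :
  mxnorm1 M <= t -> mxnorm1 F <= t -> 1 <= t ->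
  mxnorm1 (sylvester_defect e) <= e%:R * k.+1%:R * t ^+ e * mxnorm1 W.
Proof.
move=> Mt Ft t1; have t0 : 0 <= t := le_trans ler01 t1.
have W0 := mxnorm1_ge0 W.
elim: e => [|e IH].
  rewrite /sylvester_defect !expr0 mulmx1 mul1mx subrr !mul0r.
  by rewrite /mxnorm1 big1 // => i _; rewrite big1 // => j _; rewrite mxE normr0.
rewrite sylvester_defectS (le_trans (mxnorm1B _ _)) //.
have FeN : mxnorm1 ((- F) ^+ e) <= k.+1%:R * t ^+ e by rewrite mxnorm1X ?mxnorm1N.
apply: (le_trans (lerD (mxnorm1M_le Mt IH) (mxnorm1M_le (lexx _) FeN))).
rewrite exprSr -[e.+1]addn1 natrD.
have : 0 <= e%:R * k.+1%:R * t ^+ e * mxnorm1 W by rewrite !mulr_ge0 ?exprn_ge0.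
have : 0 <= k.+1%:R * t ^+ e * mxnorm1 W by rewrite !mulr_ge0 ?exprn_ge0.
nra.
Qed.

Lemma mxnorm1_mul_horner_opp (p : {poly R}) t :
  horner_mx M p = 0 -> mxnorm1 M <= t -> mxnorm1 F <= t -> 1 <= t ->
  mxnorm1 (X *m horner_mx (- F) p) <=
    (\sum_(i < size p) `|p`_i| * (i%:R * k.+1%:R * t ^+ i)) * mxnorm1 W.
Proof.
move=> pM0 Mt Ft t1.
have -> : X *m horner_mx (- F) p =
    horner_mx M p *m X - \sum_(i < size p) p`_i *: sylvester_defect i.
  rewrite -{1 2}[p]coefK !poly_def !linear_sum /= mulmx_suml -big_split /=.
  apply: eq_bigr => i _; rewrite !linearZ /= !rmorphXn /= !horner_mx_X.
  by rewrite -scalemxAl -scalerDr /sylvester_defect opprB addrC subrK.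
rewrite pM0 mul0mx sub0r mxnorm1N (le_trans (mxnorm1_sum _ _ _)) // mulr_suml.
apply: ler_sum => i _; rewrite mxnorm1Z -mulrA ler_wpM2l //.
exact: mxnorm1_sylvester_defect.
Qed.

End SylvesterDefect.

Lemma horner_char_poly (F : comNzRingType) k (A : 'M[F]_k) a :
  (char_poly A).[a] = \det (a%:M - A).
Proof.
rewrite horner_sum; apply: eq_bigr => s _.
rewrite hornerM horner_exp !hornerE; congr (_ * _).
rewrite (big_morph _ (fun p q => hornerM p q a) (hornerC 1 a)).
by apply: eq_bigr => i _; rewrite !mxE !(hornerE, hornerMn).
Qed.

Lemma char_poly_trmx (F : comNzRingType) k (A : 'M[F]_k) : char_poly A^T = char_poly A.
Proof.
rewrite /char_poly -det_tr; congr (\det _).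
by apply/matrixP => i j; rewrite !mxE eq_sym.
Qed.

Section HurwitzSpectrum.
Variable R : realType.

Lemma hurwitz_trmx k (M : 'M[R]_k) : hurwitz M -> hurwitz M^T.
Proof.
move=> HM z; rewrite /cmx -map_trmx eigenvalue_root_char char_poly_trmx.
by rewrite -eigenvalue_root_char; apply: HM.
Qed.

Lemma char_poly_split k (A : 'M[R[i]]_k) :
  {rs : seq R[i] | char_poly A = \prod_(z <- rs) ('X - z%:P) & size rs = k}.
Proof.
have [rs Ars] := closed_field_poly_normal (char_poly A).
rewrite (monicP (char_poly_monic A)) scale1r in Ars.
exists rs => //; have := size_char_poly A.
by rewrite Ars size_prod_XsubC => -[].
Qed.

Lemma hurwitz_char_poly_roots k (M : 'M[R]_k) (rs : seq R[i]) :
  hurwitz M -> char_poly (cmx M) = \prod_(z <- rs) ('X - z%:P) ->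
  forall z, z \in rs -> complex.Re z < 0.
Proof.
move=> HM Mrs z zrs.
have : Re z < 0 by apply: HM; rewrite eigenvalue_root_char Mrs root_prod_XsubC.
by rewrite -complexRe -[0 : R[i]]/((0 : R)%:C)%C ltcR.
Qed.

Lemma Re_le_normc (w : R[i]) : complex.Re w <= Normc.normc w.
Proof.
case: w => a b /=; apply: (le_trans (ler_norm a)).
by rewrite -sqrtr_sqr ler_sqrt ?lerDl ?sqr_ge0 ?addr_ge0 ?sqr_ge0.
Qed.

Lemma normc_prod (T : Type) (s : seq T) (f : T -> R[i]) :
  Normc.normc (\prod_(x <- s) f x) = \prod_(x <- s) Normc.normc (f x).
Proof.
elim: s => [|a s IH]; first by rewrite !big_nil Normc.normc1.
by rewrite !big_cons Normc.normcM IH.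
Qed.

Lemma hurwitz_det_char_poly_opp k (M : 'M[R]_k.+1) : hurwitz M ->
  exists2 c, 0 < c & forall F : 'M[R]_k.+1, hurwitz F ->
    c <= `|\det (horner_mx (- F) (char_poly M))|.
Proof.
move=> HM; have [rs Mrs _] := char_poly_split (cmx M).
have rs_neg := hurwitz_char_poly_roots HM Mrs.
exists (\prod_(z <- rs) (- complex.Re z) ^+ k.+1).
  by rewrite big_seq prodr_gt0 // => z /rs_neg zneg; rewrite exprn_gt0 ?oppr_gt0.
move=> F HF; have [ls Fls size_ls] := char_poly_split (cmx F).
have ls_neg := hurwitz_char_poly_roots HF Fls.
have -> : `|\det (horner_mx (- F) (char_poly M))| =
    Normc.normc (\det (horner_mx (- cmx F) (char_poly (cmx M)))).
  have cmxE (N : 'M[R]_k.+1) : cmx N = map_mx (real_complex R) N by [].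
  rewrite !cmxE -map_mxN -map_char_poly -map_horner_mx det_map_mx.
  by rewrite /= expr0n /= addr0 sqrtr_sqr.
rewrite Mrs rmorph_prod /= (big_morph _ (@det_mulmx _ k.+1) (det1 _ _)) normc_prod.
rewrite big_seq [X in _ <= X]big_seq; apply: ler_prod => z zrs.
have z0 : 0 <= - complex.Re z by rewrite oppr_ge0 ltW ?rs_neg.
rewrite exprn_ge0 //= rmorphB /= horner_mx_X horner_mx_C.
have -> : - cmx F - z%:M = (- z)%:M - cmx F by rewrite addrC raddfN.
rewrite -horner_char_poly Fls horner_prod normc_prod -size_ls.
have -> : (- complex.Re z) ^+ size ls = \prod_(l <- ls) - complex.Re z.
  by rewrite big_const_seq count_predT iter_mulr_1.
rewrite big_seq [X in _ <= X]big_seq; apply: ler_prod => l lls.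
rewrite z0 hornerXsubC (le_trans _ (Re_le_normc _)) //.
move: (ls_neg l lls); case: z {zrs z0} => a b; case: l {lls} => c d /= c0.
by rewrite lerDl oppr_ge0 ltW.
Qed.

End HurwitzSpectrum.

Lemma sylvester_uniform_bound (R : realType) k (M : 'M[R]_k.+1) t :
  hurwitz M -> 0 <= t ->
  exists2 c, 0 <= c & forall F X W : 'M[R]_k.+1, hurwitz F -> mxnorm1 F <= t ->
    M *m X + X *m F = - W -> mxnorm1 X <= c * mxnorm1 W.
Proof.
move=> HM t0; have [c0 c0_gt0 det_ge] := hurwitz_det_char_poly_opp HM.
set p := char_poly M; set s := 1 + mxnorm1 M + t.
have M0 := mxnorm1_ge0 M.
have s1 : 1 <= s by rewrite /s -addrA lerDl addr_ge0.
have s0 : 0 <= s := le_trans ler01 s1.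
set cT := \sum_(i < size p) `|p`_i| * (k.+1%:R * s ^+ i).
set cA := (k.+1 * k.+1)%:R * (k`!%:R * cT ^+ k).
set cX := \sum_(i < size p) `|p`_i| * (i%:R * k.+1%:R * s ^+ i).
have cT0 : 0 <= cT by rewrite sumr_ge0 // => i _; rewrite !mulr_ge0 ?exprn_ge0.
have cX0 : 0 <= cX by rewrite sumr_ge0 // => i _; rewrite !mulr_ge0 ?exprn_ge0.
exists (cX * cA / c0); first by rewrite !mulr_ge0 ?exprn_ge0 // invr_ge0 ltW.
move=> F X W HF Ft sylv; set T := horner_mx (- F) p.
have Ms : mxnorm1 M <= s by rewrite /s; lra.
have Fs : mxnorm1 F <= s by rewrite /s; lra.
have T_le : mxnorm1 T <= cT by rewrite mxnorm1_horner ?mxnorm1N.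
have adjT_le : mxnorm1 (\adj T) <= cA := mxnorm1_adj T_le.
have XT_le := mxnorm1_mul_horner_opp sylv (Cayley_Hamilton M) Ms Fs s1.
rewrite mulrAC ler_pdivlMr // mulrC.
apply: le_trans (ler_wpM2r (mxnorm1_ge0 X) (det_ge F HF)) _.
apply: le_trans (mxnorm1_mul_adj X T) _.
by rewrite mulrAC ler_pM ?mxnorm1_ge0.
Qed.

Lemma riccati_difference (R : realType) n m q (A Q P Ps : 'M[R]_n) (B : 'M_(n, m))
    (D : 'M_(n, q)) (Rr Ri : 'M_m) (K : 'M_(m, n)) (g : R) :
  Ri^T = Ri -> Ri *m Rr = 1%:M -> Rr *m Ri = 1%:M -> P^T = P -> Ps^T = Ps ->
  (A - B *m K)^T *m P + P *m (A - B *m K) + (Q + K^T *m Rr *m K)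
    + g *: (P *m D *m D^T *m P) = 0 ->
  A^T *m Ps + Ps *m A - Ps *m (B *m Ri *m B^T - g *: (D *m D^T)) *m Ps + Q = 0 ->
  let V := K - Ri *m B^T *m P in
  (A - (B *m Ri *m B^T - g *: (D *m D^T)) *m Ps)^T *m (P - Ps)
    + (P - Ps) *m (A - B *m K + g *: (D *m D^T *m P))
  = - (V^T *m Rr *m V + (P - Ps) *m B *m V).
Proof.
move=> Ri_sym RiR RRi P_sym Ps_sym P_eq Ps_eq V.
have RiRK a (X : 'M[R]_(a, m)) : X *m Ri *m Rr = X by rewrite -mulmxA RiR mulmx1.
have RRiK a (X : 'M[R]_(a, m)) : X *m Rr *m Ri = X by rewrite -mulmxA RRi mulmx1.
apply/eqP; rewrite -subr_eq0 -[X in _ == X](subr0 0) -{1}P_eq -Ps_eq; apply/eqP.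
have trB a b (X Y : 'M[R]_(a, b)) : (X - Y)^T = X^T - Y^T.
  by apply/matrixP => i j; rewrite !mxE.
have trZ a b c (X : 'M[R]_(a, b)) : (c *: X)^T = c *: X^T.
  by apply/matrixP => i j; rewrite !mxE.
rewrite /V !(trB, trZ, trmx_mul, trmxK, Ri_sym, P_sym, Ps_sym).
rewrite !(mulmxDl, mulmxDr, mulmxBl, mulmxBr, mulNmx, mulmxN, opprK).
rewrite -!(scalemxAl, scalemxAr) !mulmxA !RiRK !RRiK.
apply/matrixP => i j.
do ![rewrite [((_ + _ : 'M[R]_n) _ _)]mxE | rewrite [((- _ : 'M[R]_n) _ _)]mxE
    | rewrite [((_ *: _ : 'M[R]_n) _ _)]mxE].
lra.
Qed.

Lemma mxnorm1_le_Rm_form (R : realType) k l r (E : 'M[R]_(k, l)) (V : 'M[R]_(l, r)) :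
  Rm E \in unitmx ->
  mxnorm1 V <= mxnorm1 (invmx (Rm E) *m E^T) * (k * r)%:R *
                 Num.sqrt (mxnorm1 (V^T *m Rm E *m V)).
Proof.
move=> RE_unit; rewrite {1}(_ : V = invmx (Rm E) *m E^T *m (E *m V)).
  by rewrite -mulrA mxnorm1M_le // /Rm !mulmxA -trmx_mul -mulmxA mxnorm1_gram.
by rewrite mulmxA -(mulmxA _ E^T) mulVmx ?mul1mx.
Qed.

Section RiccatiGap.
Variables (R : realType) (n m p q : nat).
Variables (A : 'M[R]_n) (B : 'M[R]_(n, m)) (C : 'M[R]_(p, n)).
Variables (D : 'M[R]_(n, q)) (E : 'M[R]_(p, m)) (gamma : R) (Pstar : 'M[R]_n).
Hypotheses (hR : posdef (Rm E)) (hPstar : is_Pstar A B C D E gamma Pstar).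

Local Notation Ri := (invmx (Rm E)).
Local Notation g := (gamma ^- 2).

Definition gain_gap (K : 'M[R]_(m, n)) (PK : 'M[R]_n) := K - Ri *m B^T *m PK.

Definition gain_gap_form K PK := (gain_gap K PK)^T *m Rm E *m gain_gap K PK.

Definition Astar := A - (B *m Ri *m B^T - g *: (D *m D^T)) *m Pstar.

Lemma riccati_gap_sylvester K PK : is_PK A B C D E gamma K PK ->
  Astar^T *m (PK - Pstar) + (PK - Pstar) *m (A - B *m K + g *: (D *m D^T *m PK))
  = - (gain_gap_form K PK + (PK - Pstar) *m B *m gain_gap K PK).
Proof.
move=> [[PK_sym _] [PK_eq _]]; have [[Ps_sym _] [Ps_eq _]] := hPstar.
have RE_unit := posdef_unitmx hR.
apply: riccati_difference PK_eq Ps_eq => //; rewrite ?mulVmx ?mulmxV //.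
by rewrite trmx_inv; case: hR => ->.
Qed.

Variable bP : R.
Hypothesis bP_ge0 : 0 <= bP.

Definition gain_gap_const := mxnorm1 (Ri *m E^T) * (p * n)%:R.

Definition closed_loop_const :=
  mxnorm1 A + mxnorm1 B * (mxnorm1 (Ri *m B^T) * bP + gain_gap_const)
  + mxnorm1 (g *: (D *m D^T)) * bP.

Lemma gain_gap_const_ge0 : 0 <= gain_gap_const.
Proof. by rewrite mulr_ge0 ?mxnorm1_ge0. Qed.

Lemma closed_loop_const_ge0 : 0 <= closed_loop_const.
Proof.
by rewrite /closed_loop_const !(addr_ge0, mulr_ge0, mxnorm1_ge0, gain_gap_const_ge0).
Qed.

Lemma mxnorm1_gain_gap K PK :
  mxnorm1 (gain_gap K PK) <= gain_gap_const * Num.sqrt (mxnorm1 (gain_gap_form K PK)).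
Proof. exact/mxnorm1_le_Rm_form/posdef_unitmx. Qed.

Lemma mxnorm1_closed_loop K PK :
  mxnorm1 PK <= bP -> mxnorm1 (gain_gap_form K PK) <= 1 ->
  mxnorm1 (A - B *m K + g *: (D *m D^T *m PK)) <= closed_loop_const.
Proof.
move=> PK_le Psi_le1; have := mxnorm1_gain_gap K PK.
have sqrt_le1 : Num.sqrt (mxnorm1 (gain_gap_form K PK)) <= 1.
  by rewrite -sqrtr1 ler_sqrt.
move/le_trans/(_ (ler_piMr gain_gap_const_ge0 sqrt_le1)) => gap_le.
have K_le : mxnorm1 K <= mxnorm1 (Ri *m B^T) * bP + gain_gap_const.
  rewrite -[K](subrK (Ri *m B^T *m PK)) addrC (le_trans (mxnorm1D _ _)) //.
  by rewrite lerD // mxnorm1M_le.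
rewrite scalemxAl (le_trans (mxnorm1D _ _)) // lerD ?mxnorm1M_le //.
by rewrite (le_trans (mxnorm1B _ _)) // lerD2l mxnorm1M_le.
Qed.

Lemma riccati_gap_local_bound c :
  (forall F X W : 'M[R]_n, hurwitz F -> mxnorm1 F <= closed_loop_const ->
     Astar^T *m X + X *m F = - W -> mxnorm1 X <= c * mxnorm1 W) ->
  0 <= c -> forall K PK, is_PK A B C D E gamma K PK -> mxnorm1 PK <= bP ->
  let x := mxnorm1 (PK - Pstar) in let y := mxnorm1 (gain_gap_form K PK) in
  y <= 1 -> x <= c * (y + x * (mxnorm1 B * gain_gap_const) * Num.sqrt y).
Proof.
move=> sylv c0 K PK PK_def PK_le x y Psi_le1.
have [_ [_ F_hurwitz]] := PK_def.
have := sylv _ _ _ F_hurwitz (mxnorm1_closed_loop PK_le Psi_le1) (riccati_gap_sylvester PK_def).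
move/le_trans; apply; rewrite ler_wpM2l // (le_trans (mxnorm1D _ _)) // lerD2l.
rewrite (_ : x * _ * _ = x * mxnorm1 B * (gain_gap_const * Num.sqrt y)); last by ring.
by rewrite mxnorm1M_le ?mxnorm1M ?mxnorm1_gain_gap.
Qed.

End RiccatiGap.

Theorem lemma5 (R : realType) (n m p q : nat)
  (A : 'M[R]_n) (B : 'M[R]_(n, m)) (C : 'M[R]_(p, n))
  (D : 'M[R]_(n, q)) (E : 'M[R]_(p, m)) (gamma : R)
  (hgamma : 0 < gamma)
  (hQ : posdef (Qm C))
  (hEC : E^T *m C = 0)
  (hR : posdef (Rm E))
  (Pstar : 'M[R]_n) (hPstar : is_Pstar A B C D E gamma Pstar) :
  forall h : R, 0 < h ->
  exists b : R, 0 < b /\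
    forall (K : 'M[R]_(m, n)) (PK : 'M[R]_n),
      Kset A B C D E gamma K ->
      is_PK A B C D E gamma K PK ->
      \tr (PK - Pstar) <= h ->
      let K' := invmx (Rm E) *m B^T *m PK in
      let Psi := (K - K')^T *m Rm E *m (K - K') in
      frob (PK - Pstar) <= b * frob Psi.
Proof.
move=> h h_gt0.
case: n A B C D Pstar hQ hEC hPstar => [|n] A B C D Pstar _ _ hPstar.
  by exists 1; split=> // K PK *; rewrite /frob big_ord0 sqrtr0 mul1r sqrtr_ge0.
have [Ps_pos [_ Ast_hurwitz]] := hPstar.
set bP := n.+1%:R * (h + \tr Pstar).
have bP0 : 0 <= bP by rewrite mulr_ge0 ?(addr_ge0 (ltW h_gt0) (mxtrace_posdef_ge0 Ps_pos)).
have [c c0 sylv] := sylvester_uniform_bound (hurwitz_trmx Ast_hurwitz)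
  (closed_loop_const_ge0 A B D E gamma bP0).
have a0 : 0 <= mxnorm1 B * gain_gap_const n.+1 E.
  by rewrite mulr_ge0 ?mxnorm1_ge0 ?gain_gap_const_ge0.
have [b b0 absorb] := absorb_sqrt_term c0 a0 (addr_ge0 bP0 (mxnorm1_ge0 Pstar)).
exists (b * (n.+1 * n.+1)%:R + 1); split; first by rewrite ltr_pwDr ?mulr_ge0.
move=> K PK _ PK_def tr_le /=; have [PK_pos _] := PK_def.
have PK_le : mxnorm1 PK <= bP := mxnorm1_posdef_gap PK_pos tr_le.
have gap_le : mxnorm1 (PK - Pstar) <= b * mxnorm1 (gain_gap_form B E K PK).
  apply: absorb; rewrite ?mxnorm1_ge0 //.
    by rewrite (le_trans (mxnorm1B _ _)) ?lerD2r.
  exact: (riccati_gap_local_bound hR hPstar sylv c0 PK_def PK_le).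
rewrite (le_trans (frob_le_mxnorm1 _)) // (le_trans gap_le) //.
rewrite (le_trans (ler_wpM2l b0 (mxnorm1_le_frob _))) // mulrA ler_wpM2r ?sqrtr_ge0 //.
by rewrite lerDl.
Qed.
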